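(* Let $\mathcal{B}_t(x)$ denote the generalized binomial series, defined for real $t$ by $\mathcal{B}_t(x)^r=\sum_{k\ge0}\binom{tk+r}{k}\frac{r}{tk+r}x^k$ for all real $r$. Then $\mathcal{B}_3(x)$, the power series solution of $X=1+xX^3$, satisfies $$\mathcal{B}_3(x)=\mathcal{B}_{3/2}(x^{1/2})^{1/2}\,\mathcal{B}_{3/2}(-x^{1/2})^{1/2}.$$ Moreover, the two other roots $\sigma_1,\sigma_2$ of $xX^3-X+1=0$ satisfy $x^{1/2}\sigma_1=-\mathcal{B}_{3/2}(-x^{1/2})^{-1/2}$ and $x^{1/2}\sigma_2=\mathcal{B}_{3/2}(x^{1/2})^{-1/2}$, so that $xX^3-X+1=x(X-\mathcal{B}_3(x))(X-\sigma_1)(X-\sigma_2)$.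
   Context: Here $\binom{a}{k}$ for real $a$ denotes the usual generalized binomial coefficient $a(a-1)\cdots(a-k+1)/k!$. *)

(* formal power series over rat, represented by coefficient
   functions nat -> rat; Puiseux series in x^(1/2) are represented as Laurent
   series in y = x^(1/2). *)
From HB Require Import structures.
From mathcomp Require Import all_boot all_order all_algebra.
Set Implicit Arguments. Unset Strict Implicit. Unset Printing Implicit Defensive.
Import Order.TTheory GRing.Theory Num.Theory.
Local Open Scope ring_scope.

Definition gbin (a : rat) (k : nat) : rat :=
  (\prod_(i < k) (a - i%:R)) / (k`!)%:R.

(* k-th coefficient of B_t(x)^r : binom(tk+r, k) * r/(tk+r) *)
Definition Bcoef (t r : rat) (k : nat) : rat :=
  gbin (t * k%:R + r) k * (r / (t * k%:R + r)).

Definition series := nat -> rat.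
Definition sadd (f g : series) : series := fun k => f k + g k.
Definition sopp (f : series) : series := fun k => - f k.
Definition smul (f g : series) : series :=
  fun n => \sum_(i < n.+1) f i * g (n - i)%N.
Definition sone : series := fun k => (k == 0%N)%:R.
Definition sX : series := fun k => (k == 1%N)%:R.
Definition sneg (f : series) : series := fun k => (-1) ^+ k * f k.
Definition ssq (f : series) : series := fun k => if odd k then 0 else f k./2.
Definition sshift (m : nat) (f : series) : series :=
  fun k => if (m <= k)%N then f (k - m)%N else 0.

(* Laurent series: (n, f) represents y^(-n) * f(y) *)
Definition laurent := (nat * series)%type.
Definition lser (f : series) : laurent := (0%N, f).
Definition ladd (a b : laurent) : laurent :=
  ((a.1 + b.1)%N, sadd (sshift b.1 a.2) (sshift a.1 b.2)).
Definition lopp (a : laurent) : laurent := (a.1, sopp a.2).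
Definition lsub (a b : laurent) : laurent := ladd a (lopp b).
Definition lmul (a b : laurent) : laurent := ((a.1 + b.1)%N, smul a.2 b.2).
Definition lequiv (a b : laurent) : Prop :=
  forall k, sshift b.1 a.2 k = sshift a.1 b.2 k.
Definition lzero : laurent := lser (fun _ => 0).
Definition lone : laurent := lser sone.
Definition ly : laurent := lser sX.
Definition lx : laurent := lser (ssq sX).

From HB Require Import structures.
From mathcomp Require Import all_boot all_order all_algebra.
From mathcomp Require Import boolp ring.
Set Implicit Arguments. Unset Strict Implicit. Unset Printing Implicit Defensive.
Import Order.TTheory GRing.Theory Num.Theory.
Local Open Scope ring_scope.

(* The coefficients of [B_t^r] are polynomials in [r], so the convolution identity
   [B_t^r B_t^s = B_t^(r+s)] reduces to a recurrence in [r] checked at the natural numbers.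
   It gives [B_t = 1 + x B_t^t]; hence [Z = B_(3/2)(y)^(1/2)] satisfies [Z^2 = 1 + y Z^3] and
   [W = Z(-y)] satisfies [W^2 = 1 - y W^3].  Eliminating between these two equations shows
   that [u = Z W] solves [u = 1 + y^2 u^3], which determines [B_3(y^2)] uniquely.  The
   reciprocals [Z^-1 = B_(3/2)(y)^(-1/2)] and [-W^-1] solve [T^3 - T + y = 0], so [T / y] are
   the two other roots of [x X^3 - X + 1] with [x = y^2], and Vieta's relations between
   [Z W], [Z^-1] and [-W^-1] give the factorization. *)

(** * Formal power series *)

HB.instance Definition _ := gen_eqMixin series.
HB.instance Definition _ := gen_choiceMixin series.

Lemma series_ext (f g : series) : f =1 g -> f = g.
Proof. exact: funext. Qed.

Lemma saddA : associative sadd.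
Proof. by move=> f g h; apply: series_ext => k; rewrite /sadd addrA. Qed.
Lemma saddC : commutative sadd.
Proof. by move=> f g; apply: series_ext => k; rewrite /sadd addrC. Qed.
Lemma sadd0 : left_id (fun _ => 0) sadd.
Proof. by move=> f; apply: series_ext => k; rewrite /sadd add0r. Qed.
Lemma saddN : left_inverse (fun _ => 0) sopp sadd.
Proof. by move=> f; apply: series_ext => k; rewrite /sadd /sopp addNr. Qed.
HB.instance Definition _ := GRing.isZmodule.Build series saddA saddC sadd0 saddN.

Lemma smulC : commutative smul.
Proof.
move=> f g; apply: series_ext => n; rewrite /smul (reindex_inj rev_ord_inj) /=.
by apply: eq_bigr => i _; rewrite subKn ?leq_ord // mulrC.
Qed.

Lemma smul1 : left_id sone smul.
Proof.
move=> f; apply: series_ext => n; rewrite /smul big_ord_recl /sone /= mul1r subn0.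
by rewrite big1 ?addr0 // => i _; rewrite mul0r.
Qed.

Lemma smulDl : left_distributive smul sadd.
Proof.
move=> f g h; apply: series_ext => n; rewrite /smul /sadd -big_split /=.
by apply: eq_bigr => i _; rewrite mulrDl.
Qed.

Lemma smulA : associative smul.
Proof.
move=> f g h; apply: series_ext => n; rewrite /smul; symmetry.
transitivity (\sum_(i < n.+1) \sum_(j < n.+1)
   (if (j <= i)%N then f j * g (i - j)%N * h (n - i)%N else 0)).
  apply: eq_bigr => i _; rewrite big_distrl /=.
  rewrite (big_ord_widen n.+1 (fun j => f j * g (i - j)%N * h (n - i)%N)) ?ltn_ord //.
  by rewrite big_mkcond.
rewrite exchange_big /=; apply: eq_bigr => a _.
rewrite big_distrr /= -big_mkcond /=.
rewrite (eq_bigl (fun i : 'I_n.+1 => xpredT i && (a <= i)%N)) //.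
rewrite -(big_geq_mkord a n.+1 xpredT (fun i => f a * g (i - a)%N * h (n - i)%N)) /=.
rewrite -{1}(add0n a) big_addn subSn ?(ltnSE (ltn_ord a)) // big_mkord.
apply: eq_bigr => l _; rewrite addnK mulrA; congr (_ * _ * h _).
by rewrite subnDA subnAC.
Qed.

Lemma sone_neq0 : sone != 0.
Proof. by apply/eqP => /(congr1 (fun f : series => f 0%N))/eqP; rewrite oner_eq0. Qed.

HB.instance Definition _ :=
  GRing.Zmodule_isComNzRing.Build series smulA smulC smul1 smulDl sone_neq0.

Lemma scoefD (f g : series) k : (f + g) k = f k + g k. Proof. by []. Qed.
Lemma scoefN (f : series) k : (- f) k = - f k. Proof. by []. Qed.
Lemma scoef0 k : (0 : series) k = 0. Proof. by []. Qed.
Lemma scoef1 k : (1 : series) k = (k == 0%N)%:R. Proof. by []. Qed.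
Lemma scoefM (f g : series) n : (f * g) n = \sum_(i < n.+1) f i * g (n - i)%N.
Proof. by []. Qed.

Lemma scoefXM (f : series) k : (sX * f) k = if k is k'.+1 then f k' else 0.
Proof.
rewrite scoefM big_ord_recl /sX /= mul0r add0r.
case: k => [|k]; first by rewrite big_ord0.
rewrite big_ord_recl /= mul1r subSS subn0 big1 ?addr0 // => i _.
by rewrite /bump /= mul0r.
Qed.

Lemma sshiftE m (f : series) : sshift m f = sX ^+ m * f.
Proof.
elim: m => [|m IH]; first by apply: series_ext => k; rewrite mul1r /sshift subn0.
apply: series_ext => k; rewrite exprS -mulrA scoefXM -IH /sshift.
by case: k => [|k] //; rewrite ltnS subSS.
Qed.

Lemma lreg_sX : GRing.lreg sX.
Proof.
by move=> f g E; apply: series_ext => k; have := congr1 (fun h : series => h k.+1) E; rewrite !scoefXM.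
Qed.

Lemma mulX_fixed_eq0 (d e : series) : d = sX * (d * e) -> d = 0.
Proof.
move=> E; apply: series_ext => n; elim/ltn_ind: n => n IH.
rewrite E scoefXM scoef0; case: n IH => [|n] IH //.
by rewrite scoefM big1 // => i _; rewrite IH ?mul0r // ltnS leq_ord.
Qed.

Lemma coef0_lreg (f : series) : f 0%N != 0 -> GRing.lreg f.
Proof.
move=> f0 g h E; apply/eqP; rewrite -subr_eq0; apply/eqP.
move: E => /eqP; rewrite -subr_eq0 -mulrBr => /eqP; move: (g - h) => d fd0.
apply: series_ext => n; elim/ltn_ind: n => n IH.
have /eqP := congr1 (fun k : series => k n) fd0.
rewrite scoefM big_ord_recl subn0 scoef0 big1 ?addr0.
  by rewrite mulf_eq0 (negbTE f0) => /eqP.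
move=> i _; rewrite IH ?mulr0 //; case: n IH i => [|n] IH i; first by case: i.
by rewrite /bump /= subSS ltnS leq_subr.
Qed.

Lemma sneg_is_zmod_morphism : zmod_morphism sneg.
Proof. by move=> f g; apply: series_ext => n; rewrite /sneg !scoefD !scoefN mulrBr. Qed.

Lemma sneg_is_monoid_morphism : monoid_morphism sneg.
Proof.
split; first by apply: series_ext => -[|n]; rewrite /sneg scoef1 ?mulr0 // mul1r.
move=> f g; apply: series_ext => n; rewrite /sneg !scoefM big_distrr /=.
apply: eq_bigr => i _; rewrite mulrACA -exprD subnKC // -ltnS; exact: ltn_ord.
Qed.

HB.instance Definition _ := GRing.isZmodMorphism.Build series series sneg sneg_is_zmod_morphism.
HB.instance Definition _ := GRing.isMonoidMorphism.Build series series sneg sneg_is_monoid_morphism.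

Lemma sneg_sX : sneg sX = - sX.
Proof. by apply: series_ext => -[|[|n]]; rewrite /sneg scoefN /sX /= ?mulr0 ?oppr0 // mulN1r. Qed.

Lemma sum_ord_even (F : nat -> rat) m : (forall i, odd i -> F i = 0) ->
  \sum_(i < m.*2.+1) F i = \sum_(j < m.+1) F j.*2.
Proof.
move=> Fodd; elim: m => [|m IH]; first by rewrite !big_ord_recl !big_ord0.
by rewrite doubleS 2!big_ord_recr [RHS]big_ord_recr /= IH Fodd /= ?odd_double // addr0.
Qed.

Lemma ssq_is_zmod_morphism : zmod_morphism ssq.
Proof.
by move=> f g; apply: series_ext => n; rewrite /ssq !scoefD !scoefN; case: odd; rewrite ?subr0.
Qed.

Lemma ssq_is_monoid_morphism : monoid_morphism ssq.
Proof.
split; first by apply: series_ext => -[|[|n]] //; rewrite /ssq !scoef1; case: odd.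
move=> f g; apply: series_ext => n; rewrite [RHS]scoefM /ssq.
have [on|en] := boolP (odd n).
  rewrite big1 // => i _; have [oi|ei] := boolP (odd i); first by rewrite mul0r.
  by rewrite oddB -1?ltnS // on (negbTE ei) mulr0.
have -> : n = n./2.*2 by rewrite -{1}(odd_double_half n) (negbTE en).
move: n./2 => m; rewrite doubleK.
rewrite (@sum_ord_even (fun i => (if odd i then 0 else f i./2) *
    (if odd (m.*2 - i) then 0 else g (m.*2 - i)./2))) => [|i oi]; last first.
  by rewrite oi mul0r.
rewrite scoefM; apply: eq_bigr => j _.
by rewrite odd_double doubleK -doubleB odd_double doubleK.
Qed.

HB.instance Definition _ := GRing.isZmodMorphism.Build series series ssq ssq_is_zmod_morphism.
HB.instance Definition _ := GRing.isMonoidMorphism.Build series series ssq ssq_is_monoid_morphism.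

Lemma ssq_sX : ssq sX = sX ^+ 2.
Proof.
apply: series_ext => n; rewrite expr2 scoefXM /ssq.
by case: n => [|[|[|[|n]]]] //=; rewrite /sX /=; case: odd.
Qed.

(** * Generalized binomial series *)

Fixpoint ffact (u : rat) (j : nat) : rat :=
  if j is j'.+1 then u * ffact (u - 1) j' else 1.

Lemma ffactSr u j : ffact u j.+1 = ffact u j * (u - j%:R).
Proof.
elim: j u => [|j IH] u; first by rewrite /= mulr1 mul1r subr0.
change (u * ffact (u - 1) j.+1 = u * ffact (u - 1) j * (u - j.+1%:R)).
by rewrite IH mulrA -natr1 opprD addrA addrAC.
Qed.

Lemma prod_ffact a k : \prod_(i < k) (a - i%:R) = ffact a k.
Proof. by elim: k => [|k IH]; rewrite ?big_ord0 // big_ord_recr ffactSr IH. Qed.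

(* [Bcoef t r k] with the factor [r / (t k + r)] cancelled: a polynomial in [r],
   which also avoids the junk value [r / 0 = 0] of [Bcoef] when [t k + r = 0]. *)
Definition bcoef (t r : rat) (k : nat) : rat :=
  if k is j.+1 then r * ffact (r + t * k%:R - 1) j / (k`!)%:R else 1.

Lemma fact_neq0 k : (k`!)%:R != 0 :> rat.
Proof. by rewrite pnatr_eq0 -lt0n fact_gt0. Qed.

Lemma Bcoef_bcoef t r k : t * k%:R + r != 0 -> Bcoef t r k = bcoef t r k.
Proof.
rewrite /Bcoef /gbin prod_ffact; case: k => [|j] nz.
  by rewrite mulr0 add0r in nz *; rewrite divr1 mul1r divff.
rewrite /bcoef [ffact _ j.+1]/= (_ : t * j.+1%:R + r - 1 = r + t * j.+1%:R - 1); last by ring.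
move: (ffact _ j) (fact_neq0 j.+1) => p fn0; field.
by rewrite fn0 nat1r.
Qed.

Lemma bcoef0r t k : bcoef t 0 k.+1 = 0.
Proof. by rewrite /bcoef !mul0r. Qed.

Lemma bcoefS_subr1 t r j :
  bcoef t r j.+1 - bcoef t (r - 1) j.+1 = bcoef t (r + t - 1) j.
Proof.
case: j => [|m]; first by rewrite /bcoef /= !divr1; ring.
rewrite /bcoef; set u := r + t * m.+2%:R - 1.
have -> : r - 1 + t * m.+2%:R - 1 = u - 1 by rewrite /u; ring.
have -> : r + t - 1 + t * m.+1%:R - 1 = u - 1 by rewrite /u -!natr1; ring.
rewrite [ffact u _]/= ffactSr factS natrM.
have m2_neq0 : m.+2%:R != 0 :> rat by rewrite pnatr_eq0.
move: (ffact (u - 1) m) (fact_neq0 m.+1) => p fn0; rewrite /u -!natr1; field.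
by rewrite !natr1 fn0 m2_neq0.
Qed.

Definition polyfun (h : rat -> rat) := exists p : {poly rat}, h =1 horner p.

Lemma polyfun_const c : polyfun (fun _ => c).
Proof. by exists c%:P => x; rewrite hornerC. Qed.

Lemma polyfun_addc c : polyfun (fun x => x + c).
Proof. by exists ('X + c%:P) => x; rewrite hornerD hornerX hornerC. Qed.

Lemma polyfunD h1 h2 : polyfun h1 -> polyfun h2 -> polyfun (fun x => h1 x + h2 x).
Proof. by move=> [p1 e1] [p2 e2]; exists (p1 + p2) => x; rewrite hornerD e1 e2. Qed.

Lemma polyfunM h1 h2 : polyfun h1 -> polyfun h2 -> polyfun (fun x => h1 x * h2 x).
Proof. by move=> [p1 e1] [p2 e2]; exists (p1 * p2) => x; rewrite hornerM e1 e2. Qed.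

Lemma polyfunN h : polyfun h -> polyfun (fun x => - h x).
Proof. by move=> [p e]; exists (- p) => x; rewrite hornerN e. Qed.

Lemma eq_polyfun h1 h2 : h1 =1 h2 -> polyfun h1 -> polyfun h2.
Proof. by move=> E [p e]; exists p => x; rewrite -E. Qed.

Lemma polyfun_sum n (H : nat -> rat -> rat) : (forall k, polyfun (H k)) ->
  polyfun (fun x => \sum_(k < n) H k x).
Proof.
move=> HP; elim: n => [|n IH].
  by apply: eq_polyfun (polyfun_const 0) => x; rewrite big_ord0.
by apply: eq_polyfun (polyfunD IH (HP n)) => x; rewrite big_ord_recr.
Qed.

Lemma polyfun_ffact c j : polyfun (fun x => ffact (x + c) j).
Proof.
elim: j c => [|j IH] c; first exact: polyfun_const.
apply: polyfunM (polyfun_addc c) _.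
by apply: eq_polyfun (IH (c - 1)) => x; rewrite addrA.
Qed.

Lemma polyfun_bcoef t c k : polyfun (fun x => bcoef t (x + c) k).
Proof.
case: k => [|j]; first exact: polyfun_const.
apply: polyfunM (polyfun_const _); apply: polyfunM (polyfun_addc c) _.
by apply: eq_polyfun (polyfun_ffact (c + t * j.+1%:R - 1) j) => x; rewrite !addrA.
Qed.

Lemma polyfun_nat_eq0 h : polyfun h -> (forall m : nat, h m%:R = 0) -> h =1 (fun _ => 0).
Proof.
move=> [p e] h_nat x; rewrite e.
suff -> : p = 0 by rewrite horner0.
apply: (@roots_geq_poly_eq0 _ p [seq i%:R | i <- iota 0 (size p)]).
- by apply/allP => z /mapP [i _ ->]; rewrite /root -e h_nat.
- by rewrite map_inj_uniq ?iota_uniq // => a b /eqP; rewrite eqr_nat => /eqP.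
- by rewrite size_map size_iota.
Qed.

(* Both sides are polynomials in [r] whose difference is invariant under [r |-> r - 1]
   (by [bcoefS_subr1] and induction on [n]) and vanishes at [r = 0]. *)
Lemma bcoef_conv t r s n :
  \sum_(k < n.+1) bcoef t r k * bcoef t s (n - k) = bcoef t (r + s) n.
Proof.
elim: n r => [|n IH] r; first by rewrite big_ord_recl big_ord0 /= addr0 mulr1.
pose D x := \sum_(k < n.+2) bcoef t x k * bcoef t s (n.+1 - k) - bcoef t (x + s) n.+1.
have D_subr1 x : D x = D (x - 1).
  have dS : \sum_(k < n.+2) bcoef t x k * bcoef t s (n.+1 - k)
      - \sum_(k < n.+2) bcoef t (x - 1) k * bcoef t s (n.+1 - k)
      = bcoef t (x + t - 1 + s) n.
    rewrite -sumrB big_ord_recl subrr add0r -IH; apply: eq_bigr => i _.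
    by rewrite -mulrBl bcoefS_subr1.
  have dB : bcoef t (x + s) n.+1 - bcoef t (x - 1 + s) n.+1
      = bcoef t (x + t - 1 + s) n.
    rewrite (_ : x - 1 + s = x + s - 1) ?bcoefS_subr1; last by ring.
    by congr bcoef; ring.
  apply/eqP; rewrite -subr_eq0 -(subrr (bcoef t (x + t - 1 + s) n)).
  by rewrite -{1}dS -dB /D; apply/eqP; ring.
have D_poly : polyfun D.
  apply: polyfunD; last exact: polyfunN (polyfun_bcoef t s n.+1).
  apply: (@polyfun_sum _ (fun k x => bcoef t x k * bcoef t s (n.+1 - k))) => k.
  apply: polyfunM (polyfun_const _).
  by apply: eq_polyfun (polyfun_bcoef t 0 k) => x; rewrite addr0.
have D0 : D 0 = 0.
  rewrite /D big_ord_recl big1 => [|i _]; last by rewrite bcoef0r mul0r.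
  by rewrite mul1r subn0 add0r addr0 subrr.
have D_nat m : D m%:R = 0.
  by elim: m => [|m IHm] //; rewrite D_subr1 -natr1 addrK.
by have /eqP := polyfun_nat_eq0 D_poly D_nat r; rewrite subr_eq0 => /eqP.
Qed.

Definition bseries (t r : rat) : series := bcoef t r.

Lemma bseries_coef0 t r : bseries t r 0%N = 1.
Proof. by []. Qed.

Lemma bseriesD t r s : bseries t r * bseries t s = bseries t (r + s).
Proof. by apply: series_ext => n; rewrite scoefM bcoef_conv. Qed.

Lemma bseries0 t : bseries t 0 = 1.
Proof. by apply: series_ext => -[|n]; rewrite scoef1 // /bseries bcoef0r. Qed.

Lemma bseriesN t r : bseries t (- r) * bseries t r = 1.
Proof. by rewrite bseriesD addNr bseries0. Qed.

Lemma bseriesX t r n : bseries t r ^+ n = bseries t (r *+ n).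
Proof.
elim: n => [|n IH]; first by rewrite bseries0.
by rewrite exprS IH bseriesD mulrS.
Qed.

Lemma bseries1 t : bseries t 1 = 1 + sX * bseries t t.
Proof.
apply: series_ext => -[|n]; rewrite scoefD scoefXM scoef1 ?addr0 // add0r.
by have := bcoefS_subr1 t 1 n; rewrite subrr bcoef0r subr0 addrC addKr.
Qed.

Lemma bseries_root (p q : nat) : (0 < q)%N ->
  bseries (p%:R / q%:R) q%:R^-1 ^+ q = 1 + sX * bseries (p%:R / q%:R) q%:R^-1 ^+ p.
Proof.
move=> q_gt0; have q_neq0 : q%:R != 0 :> rat by rewrite pnatr_eq0 -lt0n.
rewrite !bseriesX -[q%:R^-1 *+ q]mulr_natr -[q%:R^-1 *+ p]mulr_natr mulVf //.
by rewrite bseries1 [q%:R^-1 * _]mulrC.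
Qed.

Lemma Bcoef_bseries t r : (forall k, t * k%:R + r != 0) -> Bcoef t r = bseries t r.
Proof. by move=> nz; apply: series_ext => k; rewrite Bcoef_bcoef. Qed.

Lemma natr3_add1_neq0 k : 3 * k%:R + 1 != 0 :> rat.
Proof. by rewrite -natrM natr1 pnatr_eq0. Qed.

Lemma natr3_sub1_neq0 k : 3 * k%:R - 1 != 0 :> rat.
Proof. by rewrite subr_eq0 -natrM pnatr_eq1; case: k => // k; rewrite mulnS. Qed.

Lemma Bcoef_bseries_half c : (forall k, 3 * k%:R + c != 0) ->
  Bcoef (3 / 2) (c / 2) = bseries (3 / 2) (c / 2).
Proof.
move=> nz; apply: Bcoef_bseries => k.
by rewrite (_ : _ + _ = (3 * k%:R + c) / 2) ?mulf_neq0 //; ring.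
Qed.

(** * The cubic equations *)

Lemma cubic_series_uniq (u v : series) :
  u = 1 + sX ^+ 2 * u ^+ 3 -> v = 1 + sX ^+ 2 * v ^+ 3 -> u = v.
Proof.
move=> hu hv; apply/eqP; rewrite -subr_eq0; apply/eqP.
apply: (@mulX_fixed_eq0 _ (sX * (u ^+ 2 + u * v + v ^+ 2))).
by rewrite {1}hu {1}hv; ring.
Qed.

(* [W = Z(-y)] is the other branch; eliminating between the two equations divides only by
   [Z + W] and [Z], which are regular since their constant terms are [2] and [1]. *)
Lemma cubic_branches_mul_sub (Z W : series) :
  Z ^+ 2 = 1 + sX * Z ^+ 3 -> W ^+ 2 = 1 - sX * W ^+ 3 ->
  (Z + W) 0%N != 0 -> Z 0%N != 0 ->
  Z * W = 1 + sX ^+ 2 * (Z * W) ^+ 3 /\ Z - W = sX * (Z * W) ^+ 2.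
Proof.
move=> hZ hW ZW0 Z0.
have eZ : Z ^+ 2 - 1 - sX * Z ^+ 3 = 0 by rewrite hZ; ring.
have eW : W ^+ 2 - 1 + sX * W ^+ 3 = 0 by rewrite hW; ring.
have eQ : Z ^+ 2 * W ^+ 2 - Z ^+ 2 + Z * W - W ^+ 2 = 0.
  apply: (coef0_lreg ZW0); rewrite mulr0.
  have -> : (Z + W) * (Z ^+ 2 * W ^+ 2 - Z ^+ 2 + Z * W - W ^+ 2) =
      W ^+ 3 * (Z ^+ 2 - 1 - sX * Z ^+ 3) + Z ^+ 3 * (W ^+ 2 - 1 + sX * W ^+ 3) by ring.
  by rewrite eZ eW !mulr0 addr0.
split; apply/eqP; rewrite -subr_eq0; apply/eqP.
  have -> : Z * W - (1 + sX ^+ 2 * (Z * W) ^+ 3) =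
      (Z ^+ 2 * W ^+ 2 - Z ^+ 2 + Z * W - W ^+ 2) - (Z ^+ 2 - 1) * (W ^+ 2 - 1 + sX * W ^+ 3)
      + (Z ^+ 2 - 1 - sX * Z ^+ 3) * (1 - W ^+ 2 + (W ^+ 2 - 1 + sX * W ^+ 3)) by ring.
  by rewrite eQ eZ eW !(mulr0, mul0r, subr0, addr0).
apply: (coef0_lreg Z0); rewrite mulr0.
have -> : Z * (Z - W - sX * (Z * W) ^+ 2) =
    W ^+ 2 * (Z ^+ 2 - 1 - sX * Z ^+ 3) - (Z ^+ 2 * W ^+ 2 - Z ^+ 2 + Z * W - W ^+ 2) by ring.
by rewrite eQ eZ mulr0 subr0.
Qed.

Lemma reciprocal_root (R : comPzRingType) (x z a : R) :
  z ^+ 2 = 1 + x * z ^+ 3 -> a * z = 1 -> a ^+ 3 - a + x = 0.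
Proof.
move=> hz az.
have -> : a ^+ 3 - a + x = a ^+ 3 - a * (a * z) ^+ 2 + x * (a * z) ^+ 3.
  by rewrite az !expr1n !mulr1.
have -> : a ^+ 3 - a * (a * z) ^+ 2 + x * (a * z) ^+ 3 = a ^+ 3 * (1 + x * z ^+ 3 - z ^+ 2).
  by ring.
by rewrite hz subrr mulr0.
Qed.

(* Vieta's relations for the roots [Z W], [- b / x], [a / x] of [x^2 X^3 - X + 1]. *)
Lemma reciprocal_roots_vieta (R : comPzRingType) (x Z W a b : R) :
  Z * W = 1 + x ^+ 2 * (Z * W) ^+ 3 -> Z - W = x * (Z * W) ^+ 2 ->
  a * Z = 1 -> b * W = 1 ->
  [/\ - b + a = - (x * (Z * W)),
      (- b) * a + x * (Z * W) * (- b + a) = -1 &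
      Z * W * ((- b) * a) = -1].
Proof.
move=> hs hd aZ bW.
have units_prod : Z * W * (a * b) = 1.
  have -> : Z * W * (a * b) = (a * Z) * (b * W) by ring.
  by rewrite aZ bW mulr1.
have hsum : - b + a = - (x * (Z * W)).
  have -> : - b + a = - (a * b) * (Z - W) - b * (1 - a * Z) + a * (1 - b * W) by ring.
  rewrite aZ bW !subrr !mulr0 oppr0 !addr0 hd.
  have -> : - (a * b) * (x * (Z * W) ^+ 2) = - (x * (Z * W) * (Z * W * (a * b))) by ring.
  by rewrite units_prod mulr1.
split=> //.
  rewrite hsum; have -> : (- b) * a + x * (Z * W) * - (x * (Z * W)) =
      - (a * b) * (1 + x ^+ 2 * (Z * W) ^+ 3) + x ^+ 2 * (Z * W) ^+ 2 * (Z * W * (a * b) - 1).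
    by ring.
  by rewrite -hs units_prod subrr mulr0 addr0 mulNr mulrC units_prod.
by rewrite mulNr mulrN [b * a]mulrC units_prod.
Qed.

Lemma reciprocal_root_opp (R : comPzRingType) (x w b : R) :
  w ^+ 2 = 1 - x * w ^+ 3 -> b * w = 1 -> (- b) ^+ 3 - (- b) + x = 0.
Proof.
by move=> hw bw; apply: (@reciprocal_root _ _ (- w)); rewrite ?mulrNN // sqrrN hw; ring.
Qed.

(** * Roots in Laurent series *)

Definition cubic (X : laurent) : laurent :=
  ladd (lsub (lmul lx (lmul X (lmul X X))) X) lone.

Lemma lequivP (a b : laurent) :
  lequiv a b <-> sX ^+ b.1 * a.2 = sX ^+ a.1 * b.2.
Proof.
split=> [E|E k]; last by rewrite !sshiftE E.
by apply: series_ext => k; rewrite -!sshiftE; exact: E.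
Qed.

Lemma ladd_snd (a b : laurent) : (ladd a b).2 = sX ^+ b.1 * a.2 + sX ^+ a.1 * b.2.
Proof. by rewrite /= -!sshiftE. Qed.

Lemma lmul_snd (a b : laurent) : (lmul a b).2 = a.2 * b.2.
Proof. by []. Qed.

Lemma lopp_snd (a : laurent) : (lopp a).2 = - a.2.
Proof. by []. Qed.

Lemma lone_snd : lone.2 = 1.
Proof. by []. Qed.

Lemma lx_snd : lx.2 = sX ^+ 2.
Proof. exact: ssq_sX. Qed.

(* [(n, f)] stands for [y^-n f]; the hypotheses say [y (n, f) = h] with [y = x^(1/2)]. *)
Lemma cubic_root_laurent (n : nat) (f h : series) :
  sX * f = sX ^+ n * h -> h ^+ 3 - h + sX = 0 -> lequiv (cubic (n, f)) lzero.
Proof.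
move=> hf hh; apply/lequivP.
rewrite /cubic /lsub !ladd_snd !lmul_snd lopp_snd lx_snd lone_snd /= !exprD !mul1r mulr0.
move: (sX ^+ n) hf => Y hf; apply: (@lregX _ _ 3 lreg_sX); rewrite mulr0.
transitivity (Y * sX ^+ 2 * (sX * f) ^+ 3 - Y ^+ 3 * sX ^+ 2 * (sX * f) + Y ^+ 4 * sX ^+ 3).
  by ring.
rewrite hf; transitivity (Y ^+ 4 * sX ^+ 2 * (h ^+ 3 - h + sX)); first by ring.
by rewrite hh mulr0.
Qed.

Lemma cubic_factor_laurent (m n1 n2 : nat) (g f1 f2 h1 h2 s : series) :
  sX * f1 = sX ^+ n1 * h1 -> sX * f2 = sX ^+ n2 * h2 ->
  h1 + h2 = - (sX * s) -> h1 * h2 + sX * s * (h1 + h2) = -1 -> s * (h1 * h2) = -1 ->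
  lequiv (cubic (m, g))
    (lmul lx (lmul (lsub (m, g) (lser s)) (lmul (lsub (m, g) (n1, f1)) (lsub (m, g) (n2, f2))))).
Proof.
move=> hf1 hf2 hsum hsum2 hprod.
have e1 : h1 + h2 + sX * s = 0 by rewrite hsum addNr.
apply/lequivP; rewrite /cubic /lsub !ladd_snd !lmul_snd !ladd_snd !lopp_snd lx_snd lone_snd /=.
rewrite !exprD !mul1r; move: (sX ^+ m) (sX ^+ n1) (sX ^+ n2) hf1 hf2 => Y Y1 Y2 hf1 hf2.
apply: (@lregX _ _ 2 lreg_sX).
transitivity (Y ^+ 3 * Y1 * Y2 * sX ^+ 2 * (Y * sX ^+ 2 * g ^+ 3 - Y ^+ 3 * g + Y ^+ 4)).
  by ring.
symmetry; transitivity (Y ^+ 4 * sX ^+ 2 * ((g - Y * s) *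
    ((Y1 * (sX * g) - Y * (sX * f1)) * (Y2 * (sX * g) - Y * (sX * f2))))); first by ring.
rewrite hf1 hf2; transitivity (Y ^+ 4 * Y1 * Y2 * sX ^+ 2 * (sX ^+ 2 * g ^+ 3
    - g ^+ 2 * Y * sX * (h1 + h2 + sX * s) + g * Y ^+ 2 * (h1 * h2 + sX * s * (h1 + h2))
    - Y ^+ 3 * (s * (h1 * h2)))); first by ring.
by rewrite e1 hsum2 hprod; ring.
Qed.

Theorem mainTheorem10 :
  let B3 := Bcoef 3 1 in                  (* B_3(x) *)
  let F := Bcoef (3 / 2) (1 / 2) in       (* B_{3/2}(y)^{1/2} *)
  let G := Bcoef (3 / 2) (- (1 / 2)) in   (* B_{3/2}(y)^{-1/2} *)
  let P := fun X : laurent =>            (* x X^3 - X + 1 *)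
    ladd (lsub (lmul lx (lmul X (lmul X X))) X) lone in
  (* B_3 is a power series solution of X = 1 + x X^3 *)
  B3 =1 sadd sone (smul sX (smul B3 (smul B3 B3))) /\
  (* B_3(x) = B_{3/2}(x^{1/2})^{1/2} B_{3/2}(-x^{1/2})^{1/2} *)
  ssq B3 =1 smul F (sneg F) /\
  (forall s1 s2 : laurent,
     lequiv (lmul ly s1) (lopp (lser (sneg G))) ->
     lequiv (lmul ly s2) (lser G) ->
     lequiv (P s1) lzero /\ lequiv (P s2) lzero /\
     forall X : laurent,
       lequiv (P X)
         (lmul lx (lmul (lsub X (lser (ssq B3))) (lmul (lsub X s1) (lsub X s2))))).
Proof.
move=> B3 F G P.
rewrite /B3 /F /G (Bcoef_bseries natr3_add1_neq0) (Bcoef_bseries_half natr3_add1_neq0).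
rewrite -mulNr (Bcoef_bseries_half natr3_sub1_neq0) mulNr.
set Z := bseries (3 / 2) (1 / 2); set a := bseries (3 / 2) (- (1 / 2)).
set W := sneg Z; set b := sneg a.
have hB : bseries 3 1 = 1 + sX * bseries 3 1 ^+ 3.
  by have := @bseries_root 3 1 isT; rewrite divr1 invr1 expr1.
have hZ : Z ^+ 2 = 1 + sX * Z ^+ 3 by rewrite /Z -[1 / 2]mul1r; exact: bseries_root.
have hW : W ^+ 2 = 1 - sX * W ^+ 3.
  by rewrite -!rmorphXn hZ rmorphD rmorphM rmorph1 /= sneg_sX mulNr.
have [hs hd] : Z * W = 1 + sX ^+ 2 * (Z * W) ^+ 3 /\ Z - W = sX * (Z * W) ^+ 2.
  by apply: cubic_branches_mul_sub.
have aZ : a * Z = 1 := bseriesN _ _.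
have bW : b * W = 1 by rewrite -rmorphM aZ rmorph1.
have eB : ssq (bseries 3 1) = Z * W.
  by apply: cubic_series_uniq hs; rewrite {1}hB rmorphD rmorphM rmorphXn rmorph1 /= ssq_sX.
split; first by move=> k; rewrite {1}hB.
split; first by move=> k; rewrite eB.
move=> [n1 f1] [n2 f2] /lequivP hf1 /lequivP hf2.
rewrite lmul_snd lopp_snd /= mul1r in hf1; rewrite lmul_snd /= mul1r in hf2.
split; first exact: cubic_root_laurent hf1 (reciprocal_root_opp hW bW).
split; first exact: cubic_root_laurent hf2 (reciprocal_root hZ aZ).
have [hsum hsum2 hprod] := reciprocal_roots_vieta hs hd aZ bW.
by move=> [m g]; rewrite eB; exact: cubic_factor_laurent hf1 hf2 hsum hsum2 hprod.
Qed.
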